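(* Let $\varphi$ be an AND-OR formula in which every gate has fan-in two, with its checkpoints placed and the associated formula $\varphi'$ formed as described in the context. Let $v'$ be an internal vertex of $\varphi'$, with children $c'_1,c'_2,\dots,c'_{J+1}$ sorted in decreasing order of their distances from the root of $\varphi'$, and with $s_{c'_1}\ge s_{c'_2}$. Then for every $j\ge 2$, $s_{c'_j}\le s_{v'}/2$. If $v'$ is not a small vertex, then $s_{c'_1}\le s_{v'}-\frac{1}{\sqrt 2}\sqrt{s_{v'}}$.
   Context: An AND-OR formula with fan-in-two gates is a rooted binary tree (root $r$) whose internal vertices are AND or OR gates and whose leaves are input variables. For an internal vertex $v$, $s_1(v)\ge s_2(v)\ge1$ are the numbers of leaves of its two input subformulas (child 1 is a larger one, ties broken arbitrarily). Define $\alpha(v)=\epsilon(v)=\bigl((\sqrt{s_1(v)}+\sqrt{s_2(v)})/\sqrt{s_1(v)+s_2(v)}\bigr)^{1/2}$. Checkpoint placement. Step 1: for every internal vertex $v$, mark the edge from $v$ to its smaller input subformula (child 2). Afterwards every internal vertex has exactly one unmarked edge to a child, so the unmarked edges partition the internal vertices into paths; let $\mathcal{S}$ be the set of vertices that are, for one of these paths, the endpoint closer to $r$. Step 2: for each such path, starting at its far end and moving toward the root, keep track of the product of $\alpha(v)$ (for AND gates) or $\epsilon(v)$ (for OR gates) over the internal vertices added so far; after adding a vertex that makes this product exceed $\sqrt e$, split the path by marking (checkpointing) the edge from that vertex to the next vertex of the path toward the root, and restart the product. The marked edges (''checkpoints'') divide the internal vertices of $\varphi$ into checkpointed paths. The formula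 $\varphi'$: its internal vertices are the checkpointed paths $\xi$ of $\varphi$, its leaves are the leaves of $\varphi$; the children in $\varphi'$ of a path $\xi$ with $J$ internal vertices are the $J+1$ subformulas hanging off $\xi$ (each a leaf of $\varphi$ or the path beginning at the corresponding child vertex). For a vertex $v'$ of $\varphi'$, $s_{v'}$ is the number of leaves of $\varphi$ in the subformula rooted at $v'$ (equal to $1$ for a leaf). An internal vertex $v'$ of $\varphi'$ is small if its checkpointed path has an endpoint in $\mathcal{S}$. *)

From Stdlib Require Import Reals List Sorted Permutation Arith.
Import ListNotations.
Open Scope R_scope.

Inductive gate := AND | OR.

Inductive formula :=
| Leaf (x : nat)
| Node (g : gate) (t1 t2 : formula).
(* In [Node g t1 t2], t1 is "child 1" and t2 is "child 2". *)

Fixpoint leaves (t : formula) : nat :=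
  match t with
  | Leaf _ => 1%nat
  | Node _ t1 t2 => (leaves t1 + leaves t2)%nat
  end.

(* Child 1 is a larger input subformula at every gate: s_1(v) >= s_2(v).
   (Ties are broken by the order in which the children are listed.) *)
Fixpoint child1_larger (t : formula) : Prop :=
  match t with
  | Leaf _ => True
  | Node _ t1 t2 => (leaves t2 <= leaves t1)%nat /\ child1_larger t1 /\ child1_larger t2
  end.

Definition alpha (s1 s2 : nat) : R :=
  sqrt ((sqrt (INR s1) + sqrt (INR s2)) / sqrt (INR (s1 + s2))).
Definition epsilon (s1 s2 : nat) : R :=
  sqrt ((sqrt (INR s1) + sqrt (INR s2)) / sqrt (INR (s1 + s2))).

Definition gate_weight (g : gate) (s1 s2 : nat) : R :=
  match g with AND => alpha s1 s2 | OR => epsilon s1 s2 end.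

(* Running product of Step 2 at an internal vertex v: the product of the
   weights of the vertices added since the last restart, going up the path
   of unmarked edges from its far end up to and including v.  The edge from
   v to child 1 (when child 1 is internal) is a checkpoint iff the product
   at child 1 exceeds sqrt e, in which case the product restarts. *)
Fixpoint acc (t : formula) : R :=
  match t with
  | Leaf _ => 1
  | Node g t1 t2 =>
      gate_weight g (leaves t1) (leaves t2) *
      match t1 with
      | Leaf _ => 1
      | Node _ _ _ => if Rlt_dec (sqrt (exp 1)) (acc t1) then 1 else acc t1
      end
  end.

Definition checkpoint_at (t1 : formula) : bool :=
  match t1 with
  | Leaf _ => false
  | Node _ _ _ => if Rlt_dec (sqrt (exp 1)) (acc t1) then true else false
  end.

(* Children in phi' of the checkpointed path starting at the (internal)
   vertex [t], each paired with its distance (in phi) below the top vertex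
   of the path; adding the depth of the top vertex gives the distance from
   the root r, so orderings by this number and by distance from r agree. *)
Fixpoint path_children (d : nat) (t : formula) : list (nat * formula) :=
  match t with
  | Leaf _ => []
  | Node _ t1 t2 =>
      (S d, t2) ::
      match t1 with
      | Leaf _ => [(S d, t1)]
      | Node _ _ _ =>
          if Rlt_dec (sqrt (exp 1)) (acc t1) then [(S d, t1)]
          else path_children (S d) t1
      end
  end.

(* Enumeration of the internal vertices of phi': each checkpointed path is
   represented by the subformula rooted at its top vertex, together with a
   flag telling whether it is small (has an endpoint in S).
   [st] = Some b : the current vertex starts a checkpointed path, small iff b;
   [st] = None   : the current vertex continues the path of its parent.
   A path starts at the root (in S), at a child-2 internal vertex (in S), or
   at a child-1 internal vertex whose parent edge is a checkpoint (not in S;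
   its bottom endpoint is then a child-1 vertex or itself, also not in S). *)
Fixpoint walk (st : option bool) (t : formula) : list (bool * formula) :=
  match t with
  | Leaf _ => []
  | Node _ t1 t2 =>
      (match st with Some b => [(b, t)] | None => [] end) ++
      walk (if checkpoint_at t1 then Some false else None) t1 ++
      walk (Some true) t2
  end.

Definition phi'_internal (phi : formula) : list (bool * formula) :=
  walk (Some true) phi.

(* Going down the checkpointed path of v' from v' to its deepest child c'_1, every
   vertex u has s_1(u) >= s_{c'_1}, so its weight is at most
   exp (s_2(u) / (2 sqrt s_{c'_1})) by 1 + x <= e^x, and the s_2(u) add up to
   s_{v'} - s_{c'_1}.  If v' is not small, the path was cut because its product
   exceeded sqrt e, whence s_{v'} - s_{c'_1} > sqrt s_{c'_1}, which gives the
   second bound.  Every other child of v' is a child 2 of a path vertex, so has at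
   most half the leaves of v'; the two deepest children lie at the same depth, and
   if c'_1 comes second it is no larger than the child 2 sorted first. *)

From Stdlib Require Import Reals List Sorted Permutation Arith Lra Lia.
Import ListNotations.
Open Scope R_scope.

Lemma sqrt_sum_ratio_le (a b K : R) :
  0 < K <= a -> 1 <= b -> (sqrt a + sqrt b) / sqrt (a + b) <= 1 + b / sqrt K.
Proof.
  intros [HK HKa] Hb.
  assert (HsK : 0 < sqrt K) by (apply sqrt_lt_R0; lra).
  assert (HKS : sqrt K <= sqrt (a + b)) by (apply sqrt_le_1_alt; lra).
  assert (HS : 0 < sqrt (a + b)) by lra.
  assert (Hsb : sqrt b <= b).
  { assert (1 <= sqrt b) by (rewrite <- sqrt_1; apply sqrt_le_1_alt; lra).
    pose proof (sqrt_sqrt b ltac:(lra)); nra. }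
  rewrite Rdiv_plus_distr; apply Rplus_le_compat.
  - rewrite <- (Rdiv_diag (sqrt (a + b))) by lra.
    apply Rmult_le_compat_r; [left; apply Rinv_0_lt_compat; lra|].
    apply sqrt_le_1_alt; lra.
  - apply Rle_trans with (b / sqrt (a + b)).
    + apply Rmult_le_compat_r; [left; apply Rinv_0_lt_compat|]; lra.
    + apply Rmult_le_compat_l; [lra|]. apply Rinv_le_contravar; lra.
Qed.

Lemma sqrt_1_plus_le_exp_half (y : R) : sqrt (1 + y) <= exp (y / 2).
Proof.
  replace (exp (y / 2)) with (sqrt (exp y)).
  - apply sqrt_le_1_alt, exp_ineq1_le.
  - rewrite <- (sqrt_square (exp (y / 2))) by (left; apply exp_pos).
    rewrite <- exp_plus; f_equal; f_equal; field.
Qed.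

Lemma le_sub_inv_sqrt2_sqrt (K s : R) :
  1 <= K -> sqrt K < s - K -> K <= s - / sqrt 2 * sqrt s.
Proof.
  intros HK Hlt.
  assert (HsK : 1 <= sqrt K) by (rewrite <- sqrt_1; apply sqrt_le_1_alt; lra).
  assert (HKT : K < (s - K) * (s - K)).
  { pose proof (sqrt_sqrt K ltac:(lra)); nra. }
  assert (Hhalf : s / 2 <= (s - K) * (s - K)) by nra.
  replace (/ sqrt 2 * sqrt s) with (sqrt (s / 2))
    by (rewrite sqrt_div_alt by lra; unfold Rdiv; ring).
  pose proof (sqrt_le_1_alt _ _ Hhalf) as Hsqrt.
  rewrite sqrt_square in Hsqrt by lra; lra.
Qed.

Definition is_node (t : formula) : Prop :=
  match t with Node _ _ _ => True | Leaf _ => False end.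

Fixpoint deepest_child (t : formula) : formula :=
  match t with
  | Leaf _ => t
  | Node _ t1 _ =>
      match t1 with
      | Leaf _ => t1
      | Node _ _ _ => if Rlt_dec (sqrt (exp 1)) (acc t1) then t1 else deepest_child t1
      end
  end.

Lemma leaves_pos (t : formula) : (1 <= leaves t)%nat.
Proof. induction t; simpl; lia. Qed.

Lemma INR_leaves_ge1 (t : formula) : 1 <= INR (leaves t).
Proof. apply (le_INR 1), leaves_pos. Qed.

Lemma deepest_child_leaves_le (t : formula) :
  (leaves (deepest_child t) <= leaves t)%nat.
Proof.
  induction t as [x|g t1 IH1 t2 _]; cbn [deepest_child]; [lia|].
  destruct t1 as [y|g' a b]; [|destruct (Rlt_dec _ _)]; cbn [leaves] in *; lia.
Qed.

Lemma gate_weight_alpha (g : gate) (s1 s2 : nat) : gate_weight g s1 s2 = alpha s1 s2.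
Proof. now destruct g. Qed.

Lemma alpha_le_exp (s1 s2 : nat) (K : R) :
  0 < K <= INR s1 -> (1 <= s2)%nat -> alpha s1 s2 <= exp (INR s2 / (2 * sqrt K)).
Proof.
  intros HK Hs2. unfold alpha; rewrite plus_INR.
  assert (HsK : 0 < sqrt K) by (apply sqrt_lt_R0; lra).
  apply Rle_trans with (sqrt (1 + INR s2 / sqrt K)).
  - apply sqrt_le_1_alt, sqrt_sum_ratio_le; [lra|apply (le_INR 1); exact Hs2].
  - replace (INR s2 / (2 * sqrt K)) with (INR s2 / sqrt K / 2) by (field; lra).
    apply sqrt_1_plus_le_exp_half.
Qed.

Lemma acc_nonneg (t : formula) : 0 <= acc t.
Proof.
  induction t as [x|g t1 IH1 t2 _]; cbn [acc]; [lra|].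
  apply Rmult_le_pos; [rewrite gate_weight_alpha; apply sqrt_pos|].
  destruct t1; [|destruct (Rlt_dec _ _)]; lra.
Qed.

Lemma acc_le_exp (t : formula) : child1_larger t -> is_node t ->
  acc t <= exp ((INR (leaves t) - INR (leaves (deepest_child t)))
                / (2 * sqrt (INR (leaves (deepest_child t))))).
Proof.
  induction t as [x|g t1 IH1 t2 _]; [contradiction|].
  intros [_ [H1 _]] _. cbn [acc deepest_child leaves]. rewrite gate_weight_alpha, plus_INR.
  assert (Hstep : forall K, 0 < K <= INR (leaves t1) ->
            alpha (leaves t1) (leaves t2) <= exp (INR (leaves t2) / (2 * sqrt K)))
    by (intros K HK; apply alpha_le_exp; [exact HK|apply leaves_pos]).
  assert (Hpos := INR_leaves_ge1 t1).
  assert (Hlast : alpha (leaves t1) (leaves t2) * 1 <=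
                  exp ((INR (leaves t1) + INR (leaves t2) - INR (leaves t1))
                       / (2 * sqrt (INR (leaves t1))))).
  { rewrite Rmult_1_r. replace (_ + _ - _) with (INR (leaves t2)) by ring.
    apply Hstep; lra. }
  destruct t1 as [y|g' a b]; [exact Hlast|].
  destruct (Rlt_dec _ _) as [_|_]; [exact Hlast|].
  set (t1 := Node g' a b) in *.
  set (K := INR (leaves (deepest_child t1))).
  assert (HK : 1 <= K) by apply INR_leaves_ge1.
  assert (HKs : K <= INR (leaves t1)) by apply le_INR, deepest_child_leaves_le.
  assert (HsK : 0 < sqrt K) by (apply sqrt_lt_R0; lra).
  replace ((INR (leaves t1) + INR (leaves t2) - K) / (2 * sqrt K))
    with (INR (leaves t2) / (2 * sqrt K) + (INR (leaves t1) - K) / (2 * sqrt K))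
    by (field; lra).
  rewrite exp_plus.
  apply Rmult_le_compat; [apply sqrt_pos|apply acc_nonneg|apply Hstep; lra|].
  exact (IH1 H1 I).
Qed.

Lemma sqrt_exp_1 : sqrt (exp 1) = exp (1 / 2).
Proof.
  rewrite <- (sqrt_square (exp (1 / 2))) by (left; apply exp_pos).
  rewrite <- exp_plus; f_equal; f_equal; field.
Qed.

Lemma deepest_child_leaves_bound (v : formula) :
  child1_larger v -> is_node v -> sqrt (exp 1) < acc v ->
  INR (leaves (deepest_child v)) <= INR (leaves v) - / sqrt 2 * sqrt (INR (leaves v)).
Proof.
  intros Hc Hn Hlt.
  pose proof (acc_le_exp v Hc Hn) as Hacc.
  set (K := INR (leaves (deepest_child v))) in *.
  assert (HK : 1 <= K) by apply INR_leaves_ge1.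
  assert (HsK : 0 < sqrt K) by (apply sqrt_lt_R0; lra).
  apply le_sub_inv_sqrt2_sqrt; [exact HK|].
  rewrite sqrt_exp_1 in Hlt.
  assert (Hexp : 1 / 2 < (INR (leaves v) - K) / (2 * sqrt K))
    by (apply exp_lt_inv; lra).
  apply (Rmult_lt_compat_r (2 * sqrt K)) in Hexp; [|lra].
  replace ((INR (leaves v) - K) / (2 * sqrt K) * (2 * sqrt K)) with (INR (leaves v) - K)
    in Hexp by (field; lra).
  lra.
Qed.

Lemma checkpoint_at_acc (t : formula) :
  checkpoint_at t = true -> sqrt (exp 1) < acc t.
Proof. destruct t; cbn [checkpoint_at]; [discriminate|now destruct (Rlt_dec _ _)]. Qed.

Lemma walk_child1_larger (st : option bool) (t : formula) (b : bool) (v : formula) :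
  child1_larger t -> In (b, v) (walk st t) -> child1_larger v /\ is_node v.
Proof.
  revert st. induction t as [x|g t1 IH1 t2 IH2]; cbn [walk]; [contradiction|].
  intros st Hc Hin. pose proof Hc as [_ [H1 H2]].
  apply in_app_or in Hin as [Hin|Hin]; [|apply in_app_or in Hin as [Hin|Hin]].
  - destruct st; [|contradiction]. destruct Hin as [[= _ <-]|[]]. now split.
  - exact (IH1 _ H1 Hin).
  - exact (IH2 _ H2 Hin).
Qed.

Lemma walk_not_small (st : option bool) (t v : formula) :
  In (false, v) (walk st t) -> (v = t /\ st = Some false) \/ sqrt (exp 1) < acc v.
Proof.
  revert st. induction t as [x|g t1 IH1 t2 IH2]; cbn [walk]; [contradiction|].
  intros st Hin.
  apply in_app_or in Hin as [Hin|Hin]; [|apply in_app_or in Hin as [Hin|Hin]].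
  - destruct st; [|contradiction]. destruct Hin as [[= -> <-]|[]]. now left.
  - right. destruct (IH1 _ Hin) as [[-> Hst]|Hlt]; [|exact Hlt].
    apply checkpoint_at_acc. now destruct (checkpoint_at t1).
  - destruct (IH2 _ Hin) as [[_ Hst]|Hlt]; [discriminate|now right].
Qed.

Lemma phi'_internal_not_small (phi v : formula) :
  In (false, v) (phi'_internal phi) -> sqrt (exp 1) < acc v.
Proof. intros Hin. now destruct (walk_not_small _ _ _ Hin) as [[_ Hst]|Hlt]. Qed.

Lemma path_children_shape (v : formula) : child1_larger v -> is_node v -> forall d,
  exists P D c2,
    path_children d v = P ++ [(D, c2); (D, deepest_child v)] /\ (d < D)%nat /\
    Forall (fun p => (fst p < D)%nat /\ (2 * leaves (snd p) <= leaves v)%nat) P /\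
    (leaves c2 <= leaves (deepest_child v))%nat /\ (2 * leaves c2 <= leaves v)%nat.
Proof.
  induction v as [x|g t1 IH1 t2 _]; [contradiction|].
  intros [H21 [H1 _]] _ d. cbn [path_children deepest_child leaves].
  destruct t1 as [y|g' a b]; [|destruct (Rlt_dec _ _)].
  1, 2: exists [], (S d), t2; repeat split; auto; cbn [leaves] in *; try lia.
  destruct (IH1 H1 I (S d)) as (P & D & c2 & -> & HdD & HP & Hc2 & Hc2half).
  exists ((S d, t2) :: P), D, c2. repeat split; try lia.
  constructor; [cbn [fst snd]; lia|].
  eapply Forall_impl; [|exact HP]. intros p [Hp1 Hp2]; lia.
Qed.

Section SortedByKey.

Variables (A : Type) (key : A -> nat).

Lemma sorted_desc_head_max (x : A) (l : list A) (e : A) :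
  StronglySorted (fun a b => (key b <= key a)%nat) (x :: l) -> In e (x :: l) ->
  (key e <= key x)%nat.
Proof.
  intros Hs [->|Hin]; [lia|].
  apply StronglySorted_inv in Hs as [_ Hx]. exact (proj1 (Forall_forall _ _) Hx e Hin).
Qed.

Lemma sorted_desc_perm_head (x q : A) (l P Q : list A) :
  StronglySorted (fun a b => (key b <= key a)%nat) (x :: l) ->
  Permutation (x :: l) (P ++ q :: Q) -> Forall (fun p => (key p < key q)%nat) P ->
  In x (q :: Q).
Proof.
  intros Hs Hperm HP.
  assert (Hq : (key q <= key x)%nat).
  { apply (sorted_desc_head_max _ l); [exact Hs|].
    apply (Permutation_in _ (Permutation_sym Hperm)), in_elt. }
  assert (Hx : In x (P ++ q :: Q)) by (apply (Permutation_in _ Hperm); now left).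
  apply in_app_or in Hx as [HxP|HxQ]; [|exact HxQ].
  assert (Hxq : (key x < key q)%nat) by exact (proj1 (Forall_forall _ _) HP x HxP).
  lia.
Qed.

Lemma sorted_desc_perm_snoc (y c : A) (l P : list A) :
  StronglySorted (fun a b => (key b <= key a)%nat) (y :: l) ->
  Permutation (y :: l) (P ++ [c]) -> Forall (fun p => (key p < key c)%nat) P ->
  y = c /\ Permutation l P.
Proof.
  intros Hs Hperm HP.
  destruct (sorted_desc_perm_head y c l P [] Hs Hperm HP) as [<-|[]].
  split; [reflexivity|].
  rewrite <- (app_nil_r P). exact (Permutation_cons_app_inv _ _ Hperm).
Qed.

Lemma sorted_desc_perm_last_two (a b : A) (cs P : list A) :
  key a = key b ->
  StronglySorted (fun a b => (key b <= key a)%nat) cs ->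
  Permutation cs (P ++ [a; b]) -> Forall (fun p => (key p < key a)%nat) P ->
  exists x y rest, cs = x :: y :: rest /\
    ((x = a /\ y = b) \/ (x = b /\ y = a)) /\ Permutation rest P.
Proof.
  intros Hab Hs Hperm HP.
  destruct cs as [|x l]; [now apply Permutation_nil_app_cons in Hperm|].
  pose proof (StronglySorted_inv Hs) as [Hsl _].
  assert (Hnext : forall c, Permutation l (P ++ [c]) -> key c = key a ->
            exists y rest, l = y :: rest /\ y = c /\ Permutation rest P).
  { intros c Hl Hc. destruct l as [|y rest]; [now apply Permutation_nil_app_cons in Hl|].
    rewrite <- Hc in HP.
    destruct (sorted_desc_perm_snoc y c rest P Hsl Hl HP) as [-> Hrest].
    now exists c, rest. }
  destruct (sorted_desc_perm_head x a l P [b] Hs Hperm HP) as [<-|[<-|[]]].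
  - destruct (Hnext b (Permutation_cons_app_inv _ _ Hperm) (eq_sym Hab))
      as (y & rest & -> & -> & Hrest).
    exists a, b, rest. auto.
  - assert (Hswap : Permutation (b :: l) (P ++ b :: [a])).
    { apply (perm_trans Hperm), Permutation_app_head, perm_swap. }
    destruct (Hnext a (Permutation_cons_app_inv _ _ Hswap) eq_refl)
      as (y & rest & -> & -> & Hrest).
    exists b, a, rest. auto.
Qed.

End SortedByKey.

Lemma INR_le_half (m n : nat) : (2 * m <= n)%nat -> INR m <= INR n / 2.
Proof. intros H. apply le_INR in H. rewrite mult_INR in H. simpl in H. lra. Qed.

Theorem lemma3p12 :
  forall (phi : formula), child1_larger phi ->
  forall (small : bool) (v : formula), In (small, v) (phi'_internal phi) ->
  forall (cs : list (nat * formula)),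
    Permutation cs (path_children 0 v) ->
    Sorted (fun a b => (fst b <= fst a)%nat) cs ->
    (match cs with
     | c1 :: c2 :: _ => (leaves (snd c2) <= leaves (snd c1))%nat
     | _ => True
     end) ->
    (forall j : nat, (1 <= j < length cs)%nat ->
       INR (leaves (snd (nth j cs (0%nat, Leaf 0)))) <= INR (leaves v) / 2) /\
    (small = false ->
       INR (leaves (snd (nth 0 cs (0%nat, Leaf 0))))
         <= INR (leaves v) - / sqrt 2 * sqrt (INR (leaves v))).
Proof.
  intros phi Hphi small v Hin cs Hperm Hsorted Hc1c2.
  destruct (walk_child1_larger _ _ _ _ Hphi Hin) as [Hv Hnode].
  destruct (path_children_shape v Hv Hnode 0)
    as (P & D & c2 & Hpc & _ & HP & Hc2 & Hc2half).
  rewrite Hpc in Hperm.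
  apply Sorted_StronglySorted in Hsorted; [|intros p q r; lia].
  destruct (sorted_desc_perm_last_two _ fst (D, c2) (D, deepest_child v) cs P eq_refl
              Hsorted Hperm (Forall_impl _ (fun p Hp => proj1 Hp) HP))
    as (x & y & rest & -> & Hxy & Hrest).
  cbn in Hc1c2.
  assert (Hx : (leaves (snd x) <= leaves (deepest_child v))%nat)
    by (destruct Hxy as [[-> ->]|[-> ->]]; cbn in *; lia).
  assert (Hy : (2 * leaves (snd y) <= leaves v)%nat)
    by (destruct Hxy as [[-> ->]|[-> ->]]; cbn in *; lia).
  split.
  - intros [|[|j]] Hj; [lia|apply INR_le_half, Hy|].
    apply INR_le_half. cbn in Hj |- *.
    assert (Hj_in : In (nth j rest (0%nat, Leaf 0)) P)
      by (apply (Permutation_in _ Hrest), nth_In; lia).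
    exact (proj2 (proj1 (Forall_forall _ _) HP _ Hj_in)).
  - intros ->. cbn.
    apply Rle_trans with (INR (leaves (deepest_child v))); [now apply le_INR|].
    apply deepest_child_leaves_bound; [exact Hv|exact Hnode|].
    exact (phi'_internal_not_small phi v Hin).
Qed.
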